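(* Let $L$ be a positive integer and $U>0$ with $L>\frac{8}{U}$, and let $N=2$. Consider the Lieb-Wu equations with one down spin in the unknowns $k_1,k_2$ and real $\Lambda$: $$e^{i k_j L} = \frac{\Lambda - \sin k_j - iU/4}{\Lambda - \sin k_j + iU/4},\quad j=1,2,\qquad \prod_{j=1}^2 \frac{\Lambda - \sin k_j - iU/4}{\Lambda - \sin k_j + iU/4} = 1.$$ Call a solution a $k$-$\Lambda$ two-string if $k_1 = q - i\xi$, $k_2 = q+i\xi$ with $q$ real (taken modulo $2\pi$, i.e. $q\in[0,2\pi)$) and $\xi>0$. Then such $k$-$\Lambda$ two-string solutions exist only if $\frac{\pi}{2} < q < \frac{3\pi}{2}$. The allowed values of $q$ in that range are quantized as $q = m\frac{\pi}{L}$ with $m$ an integer. For every $q = m\frac{\pi}{L}$ with $\frac{\pi}{2}<q<\frac{3\pi}{2}$ there is one and only one $k$-$\Lambda$ two-string. The total number of $k$-$\Lambda$ two-strings is $L$ if $L$ is odd and $L-1$ if $L$ is even.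
   Context: Here $k_1,k_2$ are complex numbers determined modulo $2\pi$; solutions are counted modulo permutation of $k_1,k_2$. *)

From Stdlib Require Import Reals Lra Lia ZArith List.
From Coquelicot Require Import Coquelicot.
Open Scope R_scope.

Definition Cexp (z : C) : C :=
  (exp (Re z) * cos (Im z), exp (Re z) * sin (Im z)).

Definition Csin (z : C) : C :=
  Cdiv (Cminus (Cexp (Cmult Ci z)) (Cexp (Copp (Cmult Ci z)))) (Cmult (RtoC 2) Ci).

Definition LW_num (U Lam : R) (k : C) : C :=
  Cminus (Cminus (RtoC Lam) (Csin k)) (Cmult Ci (RtoC (U / 4))).
Definition LW_den (U Lam : R) (k : C) : C :=
  Cplus (Cminus (RtoC Lam) (Csin k)) (Cmult Ci (RtoC (U / 4))).

(* One Lieb-Wu equation for k_j (denominator required to be nonzero so that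
   the equation is meaningful). *)
Definition LW_k_eq (L : nat) (U Lam : R) (k : C) : Prop :=
  LW_den U Lam k <> RtoC 0 /\
  Cexp (Cmult Ci (Cmult k (RtoC (INR L)))) = Cdiv (LW_num U Lam k) (LW_den U Lam k).

Definition LW_solution (L : nat) (U : R) (k1 k2 : C) (Lam : R) : Prop :=
  LW_k_eq L U Lam k1 /\ LW_k_eq L U Lam k2 /\
  Cmult (Cdiv (LW_num U Lam k1) (LW_den U Lam k1))
        (Cdiv (LW_num U Lam k2) (LW_den U Lam k2)) = RtoC 1.

Definition two_string (L : nat) (U q xi Lam : R) : Prop :=
  0 <= q < 2 * PI /\ 0 < xi /\
  LW_solution L U (q, - xi) (q, xi) Lam.

From Stdlib Require Import Reals Lra Lia ZArith List ClassicalEpsilon Ranalysis5.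
From Coquelicot Require Import Coquelicot.
Open Scope R_scope.

(** The product equation forces [Lam = sin q cosh xi]; the momentum equations for
    [k = q -/+ i xi] then reduce to [sin (q L) = 0], i.e. [q = m PI / L], and to the real
    equation [exp (xi L) cos (q L) (cos q sinh xi + U/4) = cos q sinh xi - U/4].
    If [cos q >= 0] the left side exceeds the right one in modulus, so [cos q < 0], which
    on [[0, 2 PI)] means [PI/2 < q < 3 PI/2].  Writing [cos q = - C] with [0 < C <= 1],
    the equation becomes [sinh xi tanh (xi L / 2) = U / (4 C)] if [cos (q L) = 1] and
    [sinh xi / tanh (xi L / 2) = U / (4 C)] if [cos (q L) = -1].  Both left sides are
    strictly increasing in [xi > 0] (the second one because [sinh (L xi) >= L sinh xi]);
    the first takes every positive value, the second every value above its limit [2 / L]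
    at [0], and [2 / L < U / (4 C)] because [L > 8 / U].  Hence each admissible [q]
    carries exactly one two-string, and they are counted by the integers [m] with
    [L < 2 m < 3 L]. *)

Lemma cosh_neg x : cosh (- x) = cosh x.
Proof. unfold cosh. rewrite Ropp_involutive. lra. Qed.

Lemma sinh_neg x : sinh (- x) = - sinh x.
Proof. unfold sinh. rewrite Ropp_involutive. lra. Qed.

Lemma exp_gt_1 x : 0 < x -> 1 < exp x.
Proof. intros Hx. pose proof (exp_ineq1 x ltac:(lra)). lra. Qed.

Lemma sinh_pos x : 0 < x -> 0 < sinh x.
Proof. intros Hx. rewrite <- sinh_0. now apply sinh_lt. Qed.

Lemma sinh_nonneg x : 0 <= x -> 0 <= sinh x.
Proof. intros [Hx|<-]; [left; now apply sinh_pos | rewrite sinh_0; lra]. Qed.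

Lemma cosh_pos x : 0 < cosh x.
Proof. unfold cosh. pose proof (exp_pos x). pose proof (exp_pos (- x)). lra. Qed.

Lemma sinh_lt_cosh x : sinh x < cosh x.
Proof. unfold sinh, cosh. pose proof (exp_pos (- x)). lra. Qed.

Lemma cosh_minus_1 x : cosh x - 1 = (exp x - 1) ^ 2 / (2 * exp x).
Proof.
  unfold cosh. rewrite exp_Ropp. pose proof (exp_pos x). field. lra.
Qed.

Lemma cosh_ge_1 x : 1 <= cosh x.
Proof.
  pose proof (cosh_minus_1 x). pose proof (exp_pos x).
  assert (0 <= (exp x - 1) ^ 2 / (2 * exp x))
    by (apply Rdiv_le_0_compat; [apply pow2_ge_0 | lra]).
  lra.
Qed.

Lemma cosh_gt_1 x : 0 < x -> 1 < cosh x.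
Proof.
  intros Hx. pose proof (cosh_minus_1 x). pose proof (exp_pos x).
  pose proof (exp_gt_1 x Hx).
  assert (0 < (exp x - 1) ^ 2 / (2 * exp x))
    by (apply Rdiv_lt_0_compat; [apply pow_lt | ]; lra).
  lra.
Qed.

Lemma exp_gt_2_sinh x : 2 * sinh x < exp x.
Proof. unfold sinh. pose proof (exp_pos (- x)). lra. Qed.

Lemma exp_mul_nat_ge (n : nat) x : (1 <= n)%nat -> 0 <= x -> exp x <= exp (x * INR n).
Proof.
  intros Hn Hx. assert (1 <= INR n) by (apply (le_INR 1); lia).
  destruct (Req_dec x (x * INR n)) as [<-|]; [lra|].
  left. apply exp_increasing. nra.
Qed.

Lemma sinh_plus x y : sinh (x + y) = sinh x * cosh y + cosh x * sinh y.
Proof. unfold sinh, cosh. rewrite Ropp_plus_distr, !exp_plus. field. Qed.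

Lemma sinh_mul_nat_ge (n : nat) x : 0 <= x -> INR n * sinh x <= sinh (x * INR n).
Proof.
  intros Hx. induction n as [|n IH].
  - rewrite Rmult_0_r, Rmult_0_l, sinh_0. lra.
  - rewrite S_INR, Rmult_plus_distr_l, Rmult_1_r, sinh_plus.
    assert (Hxn : 0 <= x * INR n) by (apply Rmult_le_pos; [lra | apply pos_INR]).
    pose proof (sinh_nonneg x Hx). pose proof (sinh_nonneg _ Hxn).
    pose proof (cosh_ge_1 x). pose proof (cosh_ge_1 (x * INR n)).
    nra.
Qed.

Lemma tanh_half y : tanh (y / 2) = (exp y - 1) / (exp y + 1).
Proof.
  unfold tanh, sinh, cosh.
  replace (exp y) with (exp (y / 2) * exp (y / 2)) by (rewrite <- exp_plus; f_equal; field).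
  rewrite exp_Ropp. pose proof (exp_pos (y / 2)).
  field. split; nra.
Qed.

Lemma tanh_pos y : 0 < y -> 0 < tanh y.
Proof. intros Hy. unfold tanh. apply Rdiv_lt_0_compat; [now apply sinh_pos | apply cosh_pos]. Qed.

Lemma tanh_lt_1 y : tanh y < 1.
Proof.
  unfold tanh. pose proof (cosh_pos y). pose proof (sinh_lt_cosh y).
  apply (Rmult_lt_reg_r (cosh y)); [lra|]. unfold Rdiv. rewrite Rmult_assoc, Rinv_l; lra.
Qed.

Lemma sin_eq_0_cos (x : R) : sin x = 0 -> cos x = 1 \/ cos x = -1.
Proof.
  intros Hs. pose proof (sin2_cos2 x) as H. unfold Rsqr in H. rewrite Hs in H.
  assert (Hc : (cos x - 1) * (cos x + 1) = 0) by lra.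
  apply Rmult_integral in Hc as [|]; lra.
Qed.

Lemma Rdiv_eq_Rdiv_iff (a b c d : R) : b <> 0 -> d <> 0 -> a / b = c / d <-> a * d = c * b.
Proof.
  intros Hb Hd. split; intros H.
  - replace a with (a / b * b) by (field; auto). rewrite H. field. auto.
  - apply (Rmult_eq_reg_r (b * d)); [|now apply Rmult_integral_contrapositive].
    replace (a / b * (b * d)) with (a * d) by (field; auto).
    replace (c / d * (b * d)) with (c * b) by (field; auto).
    exact H.
Qed.

Lemma Ci_mult_pair (a b : R) : Cmult Ci (a, b) = (- b, a).
Proof. unfold Cmult, Ci; simpl; f_equal; ring. Qed.

Lemma Csin_pair (q y : R) : Csin (q, y) = (sin q * cosh y, cos q * sinh y).
Proof.
  unfold Csin. rewrite Ci_mult_pair.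
  unfold Cexp, Copp, Cminus, Cplus, Cdiv, Cmult, Cinv, Ci, RtoC; simpl.
  rewrite Ropp_involutive, cos_neg, sin_neg.
  unfold cosh, sinh. f_equal; field.
Qed.

Lemma Cexp_Ci_mult_pair (q y r : R) :
  Cexp (Cmult Ci (Cmult (q, y) (RtoC r))) =
  (exp (- y * r) * cos (q * r), exp (- y * r) * sin (q * r)).
Proof.
  replace (Cmult (q, y) (RtoC r)) with ((q * r, y * r) : C)
    by (unfold Cmult, RtoC; simpl; f_equal; ring).
  rewrite Ci_mult_pair. unfold Cexp; simpl. now rewrite Ropp_mult_distr_l.
Qed.

Lemma LW_num_pair U Lam q y :
  LW_num U Lam (q, y) = (Lam - sin q * cosh y, - (U / 4) - cos q * sinh y).
Proof.
  unfold LW_num. rewrite Csin_pair.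
  unfold Cminus, Cplus, Copp, Cmult, Ci, RtoC; simpl. f_equal; ring.
Qed.

Lemma LW_den_pair U Lam q y :
  LW_den U Lam (q, y) = (Lam - sin q * cosh y, U / 4 - cos q * sinh y).
Proof.
  unfold LW_den. rewrite Csin_pair.
  unfold Cminus, Cplus, Copp, Cmult, Ci, RtoC; simpl. f_equal; ring.
Qed.

Lemma eq_Cdiv_iff (w a d : C) : d <> RtoC 0 -> w = Cdiv a d <-> Cmult w d = a.
Proof.
  intros Hd; split; intros H.
  - subst w. field. exact Hd.
  - subst a. field. exact Hd.
Qed.

Lemma Cmult_Cdiv_eq_1_iff (n1 d1 n2 d2 : C) : d1 <> RtoC 0 -> d2 <> RtoC 0 ->
  Cmult (Cdiv n1 d1) (Cdiv n2 d2) = RtoC 1 <-> Cmult n1 n2 = Cmult d1 d2.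
Proof.
  intros H1 H2.
  replace (Cmult (Cdiv n1 d1) (Cdiv n2 d2)) with (Cdiv (Cmult n1 n2) (Cmult d1 d2))
    by (field; auto).
  split; intros H.
  - symmetry in H. apply eq_Cdiv_iff in H; [|now apply Cmult_neq_0].
    now rewrite Cmult_1_l in H.
  - symmetry. apply eq_Cdiv_iff; [now apply Cmult_neq_0|]. now rewrite Cmult_1_l.
Qed.

(* The momentum equation of a two-string once [Lam = sin q cosh xi], with [c = cos q],
   [sg = cos (q L)] and [u = U / 4]. *)
Definition two_string_eq (L : nat) (u c sg xi : R) : Prop :=
  exp (xi * INR L) * sg * (c * sinh xi + u) = c * sinh xi - u.

Lemma two_string_eq_factors_neq_0 L u c sg xi : u <> 0 -> sg = 1 \/ sg = -1 ->
  two_string_eq L u c sg xi -> c * sinh xi + u <> 0 /\ c * sinh xi - u <> 0.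
Proof.
  unfold two_string_eq. intros Hu Hsg Heq. pose proof (exp_pos (xi * INR L)).
  split; intros Hb.
  - rewrite Hb, Rmult_0_r in Heq. lra.
  - assert (HEb : exp (xi * INR L) * sg * (c * sinh xi + u) = 0) by lra.
    apply Rmult_integral in HEb as [HEsg|]; [|lra].
    apply Rmult_integral in HEsg as [|]; destruct Hsg; lra.
Qed.

Lemma two_string_iff L U q xi Lam : 0 < U ->
  two_string L U q xi Lam <->
  0 <= q < 2 * PI /\ 0 < xi /\ Lam = sin q * cosh xi /\ sin (q * INR L) = 0 /\
  two_string_eq L (U / 4) (cos q) (cos (q * INR L)) xi.
Proof.
  intros HU. unfold two_string, LW_solution, LW_k_eq, two_string_eq.
  rewrite !LW_den_pair, !LW_num_pair, !Cexp_Ci_mult_pair, cosh_neg, sinh_neg,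
    Ropp_involutive, <- Ropp_mult_distr_r.
  set (X := Lam - sin q * cosh xi). set (b := cos q * sinh xi). set (u := U / 4).
  set (E := exp (xi * INR L)). set (E' := exp (- xi * INR L)). set (th := q * INR L).
  assert (Hu : 0 < u) by (unfold u; lra).
  assert (HE : E' * E = 1).
  { unfold E, E'. rewrite <- exp_plus, <- exp_0. f_equal. ring. }
  split.
  - intros (Hq & Hxi & [D1 H1] & [D2 H2] & P).
    rewrite Cmult_Cdiv_eq_1_iff in P by assumption.
    rewrite eq_Cdiv_iff in H1, H2 by assumption.
    unfold Cmult in H1, P; simpl in H1, P.
    apply pair_equal_spec in H1 as [H1re H1im], P as [_ Pim].
    (* the product equation reads [4 i u X = 0] *)
    assert (HX : X = 0) by nra.
    rewrite HX in *.
    assert (Hbu : b + u <> 0).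
    { intro H. apply D1. unfold RtoC. f_equal. lra. }
    assert (Hs : sin th = 0).
    { assert (HEs : E * sin th * (b + u) = 0) by lra.
      assert (0 < E) by apply exp_pos.
      apply Rmult_integral in HEs as [HEs|]; [|lra].
      apply Rmult_integral in HEs as [|]; lra. }
    repeat split; try lra. unfold X in HX; lra.
  - intros (Hq & Hxi & HX & Hs & Heq).
    replace X with 0 by (unfold X; lra).
    pose proof (sin_eq_0_cos th Hs) as Hsg.
    assert (Hc : cos th * cos th = 1) by (destruct Hsg as [-> | ->]; ring).
    destruct (two_string_eq_factors_neq_0 L u _ _ xi ltac:(lra) Hsg Heq) as [Hbu Hbu'].
    fold b in Hbu, Hbu'.
    (* the second momentum equation is the first one multiplied by [E' cos th] *)
    assert (Heq' : E' * cos th * (u - b) = - u - b).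
    { replace (- u - b) with (- (E' * E) * (cos th * cos th) * (b + u))
        by (rewrite HE, Hc; ring).
      replace (u - b) with (- (b - u)) by ring. rewrite <- Heq. ring. }
    rewrite Cmult_Cdiv_eq_1_iff, !eq_Cdiv_iff;
      unfold Cmult, RtoC; simpl;
      try (intro H; apply pair_equal_spec in H; lra).
    repeat split; try (intro H; apply pair_equal_spec in H; lra);
      f_equal; rewrite ?Hs; lra.
Qed.

Lemma is_derive_gt_right (f : R -> R) x l :
  is_derive f x l -> 0 < l -> exists h, 0 < h /\ f x < f (x + h).
Proof.
  intros Hf Hl. apply is_derive_Reals in Hf.
  destruct (Hf l Hl) as [d Hd].
  exists (d / 2). split; [apply Rdiv_lt_0_compat; [apply cond_pos | lra]|].
  pose proof (cond_pos d).
  specialize (Hd (d / 2) ltac:(lra) ltac:(rewrite Rabs_pos_eq; lra)).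
  apply Rabs_def2 in Hd as [_ Hd].
  set (slope := (f (x + d / 2) - f x) / (d / 2)) in Hd.
  assert (Hdiff : f (x + d / 2) - f x = slope * (d / 2)) by (unfold slope; field; lra).
  assert (0 < slope * (d / 2)) by (apply Rmult_lt_0_compat; lra).
  lra.
Qed.

Lemma exists_unique_pos_root (g dg : R -> R) (v a b : R) :
  (forall x, 0 < x -> is_derive g x (dg x) /\ 0 < dg x) ->
  0 < a -> 0 < b -> g a < v -> v < g b ->
  exists! x, 0 < x /\ g x = v.
Proof.
  intros Hg Ha Hb Hga Hgb.
  assert (Hincr : forall x y, 0 < x -> x < y -> g x < g y).
  { intros x y Hx Hxy.
    apply (incr_function g 0 p_infty dg); simpl; auto;
      intros z Hz _; now apply Hg. }
  assert (Hab : a < b).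
  { destruct (Rtotal_order a b) as [|[<-|Hba]]; [easy | lra |].
    pose proof (Hincr b a Hb Hba). lra. }
  destruct (IVT_interv (fun x => g x - v) a b) as (x & Hx & Hgx); try lra.
  - intros z Hz. apply continuity_pt_minus; [|apply continuity_pt_const; now intros ? ?].
    apply continuity_pt_filterlim, (@ex_derive_continuous R_AbsRing R_NormedModule).
    exists (dg z). apply Hg. lra.
  - exists x. split; [split; lra|].
    intros y [Hy Hgy].
    destruct (Rtotal_order x y) as [Hxy|[|Hxy]]; auto.
    + pose proof (Hincr x y ltac:(lra) Hxy). lra.
    + pose proof (Hincr y x Hy Hxy). lra.
Qed.

Lemma ex_unique_pos_iff (P Q : R -> Prop) :
  (forall x, 0 < x -> P x <-> Q x) ->
  (exists! x, 0 < x /\ P x) -> exists! x, 0 < x /\ Q x.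
Proof.
  intros HPQ (x & [Hx HPx] & Hu). exists x. split; [split; [|apply HPQ]; auto|].
  intros y [Hy HQy]. apply Hu. split; [|apply HPQ]; auto.
Qed.

Lemma sinh_mul_tanh_gt (n : nat) x :
  (1 <= n)%nat -> 0 < x -> sinh x - 1 < sinh x * tanh (x * INR n / 2).
Proof.
  intros Hn Hx. rewrite tanh_half.
  pose proof (exp_gt_2_sinh x). pose proof (exp_mul_nat_ge n x Hn ltac:(lra)).
  set (E := exp (x * INR n)) in *. assert (0 < E) by apply exp_pos.
  replace (sinh x * ((E - 1) / (E + 1))) with (sinh x - 1 + (E + 1 - 2 * sinh x) / (E + 1))
    by (field; lra).
  assert (0 < (E + 1 - 2 * sinh x) / (E + 1)) by (apply Rdiv_lt_0_compat; lra).
  lra.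
Qed.

Lemma sinh_mul_tanh_eq_exists_unique (n : nat) v :
  (1 <= n)%nat -> 0 < v -> exists! x, 0 < x /\ sinh x * tanh (x * INR n / 2) = v.
Proof.
  intros Hn Hv. assert (HN : 1 <= INR n) by (apply (le_INR 1); lia).
  assert (Ha : 0 < arcsinh v) by (rewrite <- arcsinh_0; now apply arcsinh_lt).
  assert (Hb : 0 < arcsinh (v + 1)) by (rewrite <- arcsinh_0; apply arcsinh_lt; lra).
  apply (exists_unique_pos_root _
    (fun x => cosh x * ((exp (x * INR n) - 1) / (exp (x * INR n) + 1))
              + sinh x * (2 * INR n * exp (x * INR n) / (exp (x * INR n) + 1) ^ 2))
    v (arcsinh v) (arcsinh (v + 1))).
  - intros x Hx. pose proof (exp_pos (x * INR n)).
    assert (1 < exp (x * INR n)) by (apply exp_gt_1; nra).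
    split.
    + apply (is_derive_ext (fun t => sinh t * ((exp (t * INR n) - 1) / (exp (t * INR n) + 1)))).
      { intros t. now rewrite tanh_half. }
      unfold sinh, cosh. auto_derive; [lra|]. field. lra.
    + pose proof (cosh_pos x). pose proof (sinh_pos x Hx).
      apply Rplus_lt_0_compat; apply Rmult_lt_0_compat; try lra;
        apply Rdiv_lt_0_compat; try apply pow_lt; nra.
  - exact Ha.
  - exact Hb.
  - rewrite sinh_arcsinh. pose proof (tanh_lt_1 (arcsinh v * INR n / 2)). nra.
  - pose proof (sinh_mul_tanh_gt n _ Hn Hb). rewrite sinh_arcsinh in *. lra.
Qed.

(* No side condition needed: at [t = 0] both sides are [0 * / 0 = 0]. *)
Lemma sinh_div_tanh_half_exp (n : nat) t :
  sinh t / tanh (t * INR n / 2) = sinh t * (exp (t * INR n) + 1) / (exp (t * INR n) - 1).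
Proof. rewrite tanh_half. unfold Rdiv. rewrite Rinv_mult, Rinv_inv. ring. Qed.

Lemma sinh_div_tanh_eq_exists_unique (n : nat) v :
  (1 <= n)%nat -> 2 < INR n * v -> exists! x, 0 < x /\ sinh x / tanh (x * INR n / 2) = v.
Proof.
  intros Hn Hnv. assert (HN : 1 <= INR n) by (apply (le_INR 1); lia).
  assert (Hv : 0 < v) by nra.
  (* [phi t > 0] means [sinh t / tanh (t n / 2) < v]; as [phi 0 = 0] and
     [phi' 0 = n v - 2 > 0], this happens for some small [t > 0]. *)
  set (phi t := v * (exp (t * INR n) - 1) - sinh t * (exp (t * INR n) + 1)).
  assert (Hphi : is_derive phi 0 (INR n * v - 2)).
  { unfold phi, sinh. auto_derive; [easy|].
    rewrite Rmult_0_l, Ropp_0, exp_0. field. }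
  destruct (is_derive_gt_right phi 0 _ Hphi ltac:(lra)) as (a & Ha & Hphia).
  assert (Hb : 0 < arcsinh v) by (rewrite <- arcsinh_0; now apply arcsinh_lt).
  apply (exists_unique_pos_root _
    (fun x => 2 * exp (x * INR n) * (cosh x * sinh (x * INR n) - INR n * sinh x)
              / (exp (x * INR n) - 1) ^ 2)
    v a (arcsinh v)); [| exact Ha | exact Hb | |].
  - intros x Hx. pose proof (exp_pos (x * INR n)).
    assert (1 < exp (x * INR n)) by (apply exp_gt_1; nra).
    split.
    + apply (is_derive_ext (fun t => sinh t * (exp (t * INR n) + 1) / (exp (t * INR n) - 1))).
      { intros t. now rewrite sinh_div_tanh_half_exp. }
      unfold sinh, cosh. auto_derive; [lra|].
      rewrite !exp_Ropp. pose proof (exp_pos x). field. lra.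
    + pose proof (cosh_gt_1 x Hx). pose proof (sinh_pos x Hx).
      pose proof (sinh_mul_nat_ge n x ltac:(lra)).
      apply Rdiv_lt_0_compat; [|apply pow_lt; lra].
      assert (0 < sinh (x * INR n)) by nra.
      apply Rmult_lt_0_compat; [lra|]. nra.
  - rewrite sinh_div_tanh_half_exp.
    unfold phi in Hphia. rewrite Rplus_0_l, Rmult_0_l, exp_0, sinh_0 in Hphia.
    assert (1 < exp (a * INR n)) by (apply exp_gt_1; nra).
    apply (Rmult_lt_reg_r (exp (a * INR n) - 1)); [lra|].
    unfold Rdiv. rewrite Rmult_assoc, Rinv_l by lra. lra.
  - rewrite sinh_arcsinh.
    pose proof (tanh_pos (arcsinh v * INR n / 2) ltac:(nra)).
    pose proof (tanh_lt_1 (arcsinh v * INR n / 2)).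
    set (t := tanh (arcsinh v * INR n / 2)) in *.
    apply (Rmult_lt_reg_r t); [lra|].
    replace (v / t * t) with v by (field; lra). nra.
Qed.

Lemma not_two_string_eq_nonneg (L : nat) u c sg xi :
  (1 <= L)%nat -> 0 < u -> 0 <= c -> sg = 1 \/ sg = -1 -> 0 < xi -> ~ two_string_eq L u c sg xi.
Proof.
  intros HL Hu Hc Hsg Hxi. unfold two_string_eq.
  pose proof (exp_mul_nat_ge L xi HL ltac:(lra)).
  pose proof (exp_gt_1 xi Hxi).
  assert (0 <= c * sinh xi) by (pose proof (sinh_pos xi Hxi); nra).
  destruct Hsg as [-> | ->]; nra.
Qed.

Lemma two_string_eq_exists_unique (L : nat) u c sg :
  (1 <= L)%nat -> 2 < u * INR L -> -1 <= c < 0 -> sg = 1 \/ sg = -1 ->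
  exists! xi, 0 < xi /\ two_string_eq L u c sg xi.
Proof.
  intros HL HuL Hc Hsg. assert (HN : 1 <= INR L) by (apply (le_INR 1); lia).
  assert (Hu : 0 < u) by nra.
  assert (Hv : u <= u / - c).
  { apply (Rmult_le_reg_r (- c)); [lra|]. field_simplify; nra. }
  assert (HE : forall xi, 0 < xi -> 1 < exp (xi * INR L))
    by (intros xi Hxi; apply exp_gt_1; nra).
  destruct Hsg as [-> | ->].
  - apply (ex_unique_pos_iff (fun xi => sinh xi * tanh (xi * INR L / 2) = u / - c));
      [| apply sinh_mul_tanh_eq_exists_unique; auto; lra].
    intros xi Hxi. specialize (HE xi Hxi).
    rewrite tanh_half, Rmult_div_assoc, Rdiv_eq_Rdiv_iff by lra.
    unfold two_string_eq. split; intros; lra.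
  - apply (ex_unique_pos_iff (fun xi => sinh xi / tanh (xi * INR L / 2) = u / - c));
      [| apply sinh_div_tanh_eq_exists_unique; auto; nra].
    intros xi Hxi. specialize (HE xi Hxi).
    rewrite sinh_div_tanh_half_exp, Rdiv_eq_Rdiv_iff by lra.
    unfold two_string_eq. split; intros; lra.
Qed.

Lemma In_seq_half_iff (L n : nat) :
  In n (seq (Nat.div2 L + 1) (if Nat.even L then (L - 1)%nat else L)) <->
  (L < 2 * n < 3 * L)%nat.
Proof.
  rewrite in_seq.
  destruct (Nat.Even_or_Odd L) as [[k ->]|[k ->]].
  - rewrite Nat.div2_double, Nat.even_even. lia.
  - rewrite Nat.div2_odd', Nat.even_odd. lia.
Qed.

Section TwoStrings.

Variables (L : nat) (U : R).
Hypotheses (HL : (0 < L)%nat) (HU : 0 < U).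

Let HLpos : 0 < INR L.
Proof. apply lt_0_INR. lia. Qed.

Lemma two_string_q_range q xi Lam : two_string L U q xi Lam ->
  PI / 2 < q < 3 * PI / 2 /\ exists m : Z, q = IZR m * PI / INR L.
Proof.
  intros H. apply two_string_iff in H as (Hq & Hxi & _ & Hs & Heq); [|exact HU].
  pose proof PI_RGT_0 as HPI. split.
  - assert (Hc : cos q < 0).
    { apply Rnot_le_lt. intro Hc. revert Heq. apply not_two_string_eq_nonneg; auto.
      - lra.
      - now apply sin_eq_0_cos. }
    split; apply Rnot_le_lt; intro Hq'.
    + pose proof (cos_ge_0 q ltac:(lra) Hq'). lra.
    + pose proof (cos_ge_0_3PI2 q ltac:(lra) ltac:(lra)). lra.
  - destruct (sin_eq_0_0 _ Hs) as [m Hm]. exists m. rewrite <- Hm. field. lra.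
Qed.

Hypothesis HUL : 8 / U < INR L.

Lemma two_string_exists_unique (m : Z) : PI / 2 < IZR m * PI / INR L < 3 * PI / 2 ->
  exists! p : R * R, two_string L U (IZR m * PI / INR L) (fst p) (snd p).
Proof.
  intros Hm. set (q := IZR m * PI / INR L) in *. pose proof PI_RGT_0 as HPI.
  assert (Hs : sin (q * INR L) = 0) by (apply sin_eq_0_1; exists m; unfold q; field; lra).
  destruct (two_string_eq_exists_unique L (U / 4) (cos q) (cos (q * INR L)))
    as (xi & [Hxi Heq] & Huniq).
  - lia.
  - assert (8 / U * U = 8) by (field; lra). nra.
  - pose proof (COS_bound q). pose proof (cos_lt_0 q ltac:(lra) ltac:(lra)). lra.
  - now apply sin_eq_0_cos.
  - exists (xi, sin q * cosh xi). split.
    + apply two_string_iff; [exact HU|]. repeat split; auto; lra.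
    + intros [xi' Lam'] Hp. apply two_string_iff in Hp as (_ & Hxi' & HLam & _ & Heq');
        [|exact HU].
      simpl in *. subst Lam'. now rewrite <- (Huniq xi').
Qed.

Lemma q_range_nat_iff (n : nat) :
  PI / 2 < INR n * PI / INR L < 3 * PI / 2 <-> (L < 2 * n < 3 * L)%nat.
Proof.
  pose proof PI_RGT_0 as HPI. pose proof HLpos.
  assert (Hq : INR n * PI / INR L * INR L = INR n * PI) by (field; lra).
  set (q := INR n * PI / INR L) in *.
  assert (H2n : INR (2 * n) = 2 * INR n) by (rewrite mult_INR; simpl; ring).
  assert (H3L : INR (3 * L) = 3 * INR L) by (rewrite mult_INR; simpl; ring).
  split.
  - intros [H1 H2]. split; apply INR_lt; rewrite ?H2n, ?H3L; nra.
  - intros [H1 H2]. apply lt_INR in H1, H2. rewrite H2n, H3L in *. split; nra.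
Qed.

Lemma two_string_q_nat q xi Lam : two_string L U q xi Lam ->
  exists n : nat, q = INR n * PI / INR L /\ (L < 2 * n < 3 * L)%nat.
Proof.
  intros Hs. destruct (two_string_q_range q xi Lam Hs) as [Hr [m Hm]].
  pose proof PI_RGT_0 as HPI. pose proof HLpos.
  assert (Hm0 : (0 <= m)%Z).
  { assert (Hq : q * INR L = IZR m * PI) by (subst q; field; lra).
    apply le_IZR. nra. }
  exists (Z.to_nat m).
  assert (Hq : q = INR (Z.to_nat m) * PI / INR L) by now rewrite INR_IZR_INZ, Z2Nat.id.
  split; [exact Hq | apply q_range_nat_iff; now rewrite <- Hq].
Qed.

(* Only meaningful for admissible [n], where the two-string is unique. *)
Definition string_at (n : nat) : R * R :=
  epsilon (inhabits (0, 0)) (fun p => two_string L U (INR n * PI / INR L) (fst p) (snd p)).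

Lemma two_string_count : exists s : list (R * R * R),
  NoDup s /\
  (forall q xi Lam : R, In (q, xi, Lam) s <-> two_string L U q xi Lam) /\
  length s = (if Nat.even L then (L - 1)%nat else L).
Proof.
  pose proof PI_RGT_0 as HPI. pose proof HLpos.
  set (ns := seq (Nat.div2 L + 1) (if Nat.even L then (L - 1)%nat else L)).
  assert (Hex : forall n, In n ns ->
            exists! p, two_string L U (INR n * PI / INR L) (fst p) (snd p)).
  { intros n Hn. rewrite INR_IZR_INZ. apply two_string_exists_unique.
    rewrite <- INR_IZR_INZ. apply q_range_nat_iff, In_seq_half_iff, Hn. }
  assert (Hat : forall n, In n ns ->
            two_string L U (INR n * PI / INR L) (fst (string_at n)) (snd (string_at n))).
  { intros n Hn. unfold string_at. apply epsilon_spec.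
    destruct (Hex n Hn) as (p & Hp & _). now exists p. }
  exists (map (fun n => (INR n * PI / INR L, fst (string_at n), snd (string_at n))) ns).
  split; [|split].
  - apply NoDup_map_NoDup_ForallPairs; [|apply seq_NoDup].
    intros a b _ _ Hab. injection Hab as Hab _ _.
    apply INR_eq. apply (Rmult_eq_reg_r (PI / INR L)); [|apply Rgt_not_eq, Rdiv_lt_0_compat; lra].
    rewrite <- !Rmult_div_assoc in Hab. exact Hab.
  - intros q xi Lam. rewrite in_map_iff. split.
    + intros (n & Hn & Hin). injection Hn as <- <- <-. now apply Hat.
    + intros Hs. destruct (two_string_q_nat q xi Lam Hs) as (n & -> & Hn).
      assert (Hin : In n ns) by now apply In_seq_half_iff.
      exists n. split; [|exact Hin].
      destruct (Hex n Hin) as (p & _ & Hu).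
      now rewrite <- (Hu _ (Hat n Hin)), (Hu (xi, Lam) Hs).
  - rewrite length_map. apply length_seq.
Qed.

End TwoStrings.

Theorem mainTheorem3 (L : nat) (U : R) :
  (0 < L)%nat -> 0 < U -> 8 / U < INR L ->
  (* two-strings exist only for pi/2 < q < 3pi/2, and q is quantized as m pi / L *)
  (forall q xi Lam : R, two_string L U q xi Lam ->
     PI / 2 < q < 3 * PI / 2 /\ exists m : Z, q = IZR m * PI / INR L) /\
  (* for every such q = m pi / L there is one and only one two-string *)
  (forall m : Z, PI / 2 < IZR m * PI / INR L < 3 * PI / 2 ->
     exists! p : R * R, two_string L U (IZR m * PI / INR L) (fst p) (snd p)) /\
  (* the total number of two-strings (q, xi, Lam) is L (L odd) or L - 1 (L even) *)
  (exists s : list (R * R * R),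
     NoDup s /\
     (forall q xi Lam : R, In (q, xi, Lam) s <-> two_string L U q xi Lam) /\
     length s = (if Nat.even L then (L - 1)%nat else L)).
Proof.
  intros HL HU HUL. split; [|split].
  - exact (two_string_q_range L U HL HU).
  - exact (two_string_exists_unique L U HL HU HUL).
  - exact (two_string_count L U HL HU HUL).
Qed.
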